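(* Let $P:\mathcal{C}^{\mathrm{op}}\to\mathbf{Hey}$ be a Gödel hyperdoctrine such that $\top$ is existential-free. Then $P$ satisfies the Rule of Choice: for all objects $A,B$ of $\mathcal{C}$ and every existential-free predicate $\alpha\in P(A\times B)$, if \[ a:A\;|\;\top\vdash\exists b.\alpha(a,b),\] then there is an arrow (term) $g:A\to B$ such that \[ a:A\;|\;\top\vdash\alpha(a,g(a)).\]
   Context: A hyperdoctrine is a functor $P:\mathcal{C}^{\mathrm{op}}\to\mathbf{Hey}$ from a cartesian closed category $\mathcal{C}$ to Heyting algebras such that each $P_f$ has a left adjoint $\exists_f$ and a right adjoint $\forall_f$ satisfying Beck–Chevalley. A Gödel hyperdoctrine is a hyperdoctrine which (as a functor to $\mathbf{Pos}$) is a Gödel doctrine. A doctrine $P:\mathcal{C}^{\mathrm{op}}\to\mathbf{Pos}$ ($\mathcal{C}$ with finite products) is existential/universal if reindexing along each product projection $\pi$ has a left adjoint $\exists_\pi$ / right adjoint $\forall_\pi$ satisfying Beck–Chevalley along pullbacks of projections. Notation: $a:A\;|\;\phi\vdash\psi$ means $\phi\le\psi$ in $P(A)$; $\exists b.\alpha(a,b)=\exists_{\pi_A}\alpha$ for $\pi_A:A\times B\to A$; $\alpha(a,g(a))$ denotes $P_{\langle1_A,g\rangle}\alpha$. In an existential doctrine, $\alpha\in P(I)$ is existential-free if for every $f:A\to I$, every $B$ and every $\beta\in P(A\times B)$ with $P_f\alpha\le\exists_{\pi_A}\beta$ there is $g:A\to B$ with $P_f\alpha\le P_{\langle1_A,g\rangle}\beta$.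 In a universal doctrine $Q$, $\alpha\in Q(I)$ is universal-free if for every $f:A\to I$, every $B$ and every $\beta\in Q(A\times B)$ with $\forall_{\pi_A}\beta\le Q_f\alpha$ there is $g:A\to B$ with $Q_{\langle1_A,g\rangle}\beta\le Q_f\alpha$. Enough existential-free (universal-free) predicates: every $\alpha\in P(I)$ equals $\exists_{\pi_I}\beta$ (resp. $\forall_{\pi_I}\beta$) for some $A$ and existential-free (universal-free) $\beta\in P(I\times A)$. A Gödel doctrine: (1) $\mathcal{C}$ cartesian closed; (2) $P$ existential and universal; (3) $P$ has enough existential-free predicates; (4) existential-free predicates are stable under $\forall_\pi$ for projections $\pi$; (5) the sub-doctrine $P'$ of existential-free predicates (a universal doctrine) has enough universal-free predicates. ''$\top$ is existential-free'' means $\top\in P(I)$ is existential-free for every object $I$. *)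

Set Implicit Arguments.
Unset Strict Implicit.

Record Category := {
  Ob :> Type;
  Hom : Ob -> Ob -> Type;
  idm : forall A, Hom A A;
  comp : forall A B C, Hom B C -> Hom A B -> Hom A C;
  comp_id_l : forall A B (f : Hom A B), comp (idm B) f = f;
  comp_id_r : forall A B (f : Hom A B), comp f (idm A) = f;
  comp_assoc : forall A B C D (f : Hom A B) (g : Hom B C) (h : Hom C D),
      comp h (comp g f) = comp (comp h g) f
}.
Arguments Hom {c} _ _.
Arguments idm {c} _.
Arguments comp {c A B C} _ _.

(** Pullback squares:   D --p--> A
                        |q       |f
                        v        v
                        C' --g-> B                                         *)
Definition is_pullback (C : Category) (D A C' B : C)
    (p : Hom D A) (q : Hom D C') (f : Hom A B) (g : Hom C' B) : Prop :=
  comp f p = comp g q /\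
  forall X (u : Hom X A) (v : Hom X C'), comp f u = comp g v ->
    exists! h : Hom X D, comp p h = u /\ comp q h = v.

Record CartesianClosed (C : Category) := {
  term : C;
  to_term : forall A : C, Hom A term;
  to_term_unique : forall (A : C) (f : Hom A term), f = to_term A;
  prod : C -> C -> C;
  pr1 : forall A B : C, Hom (prod A B) A;
  pr2 : forall A B : C, Hom (prod A B) B;
  pair : forall (X A B : C), Hom X A -> Hom X B -> Hom X (prod A B);
  pr1_pair : forall X A B (f : Hom X A) (g : Hom X B), comp (pr1 A B) (pair f g) = f;
  pr2_pair : forall X A B (f : Hom X A) (g : Hom X B), comp (pr2 A B) (pair f g) = g;
  pair_unique : forall X A B (f : Hom X A) (g : Hom X B) (h : Hom X (prod A B)),
      comp (pr1 A B) h = f -> comp (pr2 A B) h = g -> h = pair f g;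
  exp : C -> C -> C;   (* exp B Y = Y^B *)
  ev : forall B Y : C, Hom (prod (exp B Y) B) Y;
  curry : forall A B Y : C, Hom (prod A B) Y -> Hom A (exp B Y);
  ev_curry : forall A B Y (f : Hom (prod A B) Y),
      comp (ev B Y) (pair (comp (curry f) (pr1 A B)) (pr2 A B)) = f;
  curry_unique : forall A B Y (f : Hom (prod A B) Y) (h : Hom A (exp B Y)),
      comp (ev B Y) (pair (comp h (pr1 A B)) (pr2 A B)) = f -> h = curry f
}.
Arguments term {C} c.
Arguments prod {C} c _ _.
Arguments pr1 {C} c _ _.
Arguments pr2 {C} c _ _.
Arguments pair {C} c {X A B} _ _.

Record Hyperdoctrine (C : Category) (CC : CartesianClosed C) := {
  pred : C -> Type;
  le : forall A, pred A -> pred A -> Prop;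
  le_refl : forall A (x : pred A), le x x;
  le_trans : forall A (x y z : pred A), le x y -> le y z -> le x z;
  le_antisym : forall A (x y : pred A), le x y -> le y x -> x = y;
  top : forall A, pred A;
  bot : forall A, pred A;
  meet : forall A, pred A -> pred A -> pred A;
  join : forall A, pred A -> pred A -> pred A;
  impl : forall A, pred A -> pred A -> pred A;
  top_max : forall A (x : pred A), le x (top A);
  bot_min : forall A (x : pred A), le (bot A) x;
  meet_spec : forall A (x y z : pred A), le z (meet x y) <-> (le z x /\ le z y);
  join_spec : forall A (x y z : pred A), le (join x y) z <-> (le x z /\ le y z);
  impl_spec : forall A (x y z : pred A), le z (impl x y) <-> le (meet z x) y;
  reindex : forall A B : C, Hom A B -> pred B -> pred A;
  reindex_id : forall A (x : pred A), reindex (idm A) x = x;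
  reindex_comp : forall A B D (f : Hom A B) (g : Hom B D) (x : pred D),
      reindex (comp g f) x = reindex f (reindex g x);
  reindex_mono : forall A B (f : Hom A B) (x y : pred B),
      le x y -> le (reindex f x) (reindex f y);
  reindex_top : forall A B (f : Hom A B), reindex f (top B) = top A;
  reindex_bot : forall A B (f : Hom A B), reindex f (bot B) = bot A;
  reindex_meet : forall A B (f : Hom A B) (x y : pred B),
      reindex f (meet x y) = meet (reindex f x) (reindex f y);
  reindex_join : forall A B (f : Hom A B) (x y : pred B),
      reindex f (join x y) = join (reindex f x) (reindex f y);
  reindex_impl : forall A B (f : Hom A B) (x y : pred B),
      reindex f (impl x y) = impl (reindex f x) (reindex f y);
  ex : forall A B : C, Hom A B -> pred A -> pred B;
  all : forall A B : C, Hom A B -> pred A -> pred B;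
  ex_adj : forall A B (f : Hom A B) (a : pred A) (b : pred B),
      le (ex f a) b <-> le a (reindex f b);
  all_adj : forall A B (f : Hom A B) (a : pred A) (b : pred B),
      le (reindex f b) a <-> le b (all f a);
  ex_BC : forall D A C' B (p : Hom D A) (q : Hom D C') (f : Hom A B) (g : Hom C' B),
      is_pullback p q f g -> forall a : pred A,
      reindex g (ex f a) = ex q (reindex p a);
  all_BC : forall D A C' B (p : Hom D A) (q : Hom D C') (f : Hom A B) (g : Hom C' B),
      is_pullback p q f g -> forall a : pred A,
      reindex g (all f a) = all q (reindex p a)
}.
Arguments pred {C CC} h _.
Arguments le {C CC} h {A} _ _.
Arguments top {C CC} h A.
Arguments reindex {C CC} h {A B} _ _.
Arguments ex {C CC} h {A B} _ _.
Arguments all {C CC} h {A B} _ _.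

Section Goedel.
Variables (C : Category) (CC : CartesianClosed C) (P : Hyperdoctrine CC).

Definition existential_free (I : C) (alpha : pred P I) : Prop :=
  forall (A : C) (f : Hom A I) (B : C) (beta : pred P (prod CC A B)),
    le P (reindex P f alpha) (ex P (pr1 CC A B) beta) ->
    exists g : Hom A B,
      le P (reindex P f alpha) (reindex P (pair CC (idm A) g) beta).

(** alpha is universal-free in the sub-doctrine P' of existential-free
    predicates (whose universal quantifier is the restriction of that of P) *)
Definition universal_free_ef (I : C) (alpha : pred P I) : Prop :=
  forall (A : C) (f : Hom A I) (B : C) (beta : pred P (prod CC A B)),
    existential_free beta ->
    le P (all P (pr1 CC A B) beta) (reindex P f alpha) ->
    exists g : Hom A B,
      le P (reindex P (pair CC (idm A) g) beta) (reindex P f alpha).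

(** A Goedel doctrine (conditions (1) and (2) are provided by the
    cartesian closed structure and the hyperdoctrine quantifiers). *)
Definition godel_doctrine : Prop :=
  (forall (I : C) (alpha : pred P I),
     exists (A : C) (beta : pred P (prod CC I A)),
       existential_free beta /\ alpha = ex P (pr1 CC I A) beta) /\
  (forall (I A : C) (beta : pred P (prod CC I A)),
     existential_free beta -> existential_free (all P (pr1 CC I A) beta)) /\
  (forall (I A : C) (beta : pred P (prod CC A I)),
     existential_free beta -> existential_free (all P (pr2 CC A I) beta)) /\
  (forall (I : C) (alpha : pred P I),
     existential_free alpha ->
     exists (A : C) (beta : pred P (prod CC I A)),
       existential_free beta /\ universal_free_ef beta /\
       alpha = all P (pr1 CC I A) beta).

Definition top_existential_free : Prop :=
  forall I : C, existential_free (top P I).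

End Goedel.


Section RuleOfChoice.
Variables (C : Category) (CC : CartesianClosed C) (P : Hyperdoctrine CC).

Lemma top_existential_free_choice (A B : C) (beta : pred P (prod CC A B)) :
  existential_free (top P A) ->
  le P (top P A) (ex P (pr1 CC A B) beta) ->
  exists g : Hom A B, le P (top P A) (reindex P (pair CC (idm A) g) beta).
Proof.
  intros Htop Hex.
  destruct (Htop A (idm A) B beta) as [g Hg].
  - rewrite reindex_id. exact Hex.
  - exists g. rewrite reindex_id in Hg. exact Hg.
Qed.

End RuleOfChoice.

Theorem corollary3 (C : Category) (CC : CartesianClosed C) (P : Hyperdoctrine CC)
  (HG : godel_doctrine P) (Htop : top_existential_free P)
  (A B : C) (alpha : pred P (prod CC A B))
  (Hef : existential_free alpha)
  (Hex : le P (top P A) (ex P (pr1 CC A B) alpha)) :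
  exists g : Hom A B, le P (top P A) (reindex P (pair CC (idm A) g) alpha).
Proof.
  apply top_existential_free_choice; [exact (Htop A) | exact Hex].
Qed.
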